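(* Let $N\ge 3$, $R>0$, and let $p^i > \frac{N+2}{N-2}$ be such that $R^i_{p^i} = R$ for some integer $i\ge 1$. Let $U^*_{p^i}$ be the solution of $(\ast)_{p^i}$ below, regarded as the radial function $x\mapsto U^*_{p^i}(|x|)$ on $B_R\setminus\{0\}$. Then $m(U^*_{p^i}) < \infty$ if $p^i > p_{JL}$, while $m(U^*_{p^i}) = \infty$ if $\frac{N+2}{N-2} < p^i < p_{JL}$.
   Context: For $N\ge 3$ and $p > \frac{N+2}{N-2}$ set $\theta = \frac{2}{p-1}$ and $A_{p,N} = [\theta(N-2-\theta)]^{\frac{1}{p-1}}$. It is known (Miyamoto) that there is a unique function $U_p^*$ solving $$(\ast)_p\qquad -u'' - \frac{N-1}{r}u' + u = u^p \text{ on } (0,\infty),\qquad \lim_{r\to 0^+} r^\theta u(r) = A_{p,N},\qquad u>0 \text{ on } (0,\infty).$$ $(R_p^i)_{i\ge1}$ denotes the increasing sequence of positive numbers with $(U_p^* )'(R_p^i)=0$; thus when $R_p^i = R$, $U_p^*$ satisfies the Neumann condition on $\partial B_R$, where $B_R\subset\mathbb{R}^N$ is the ball of radius $R$ centred at $0$. The Joseph–Lundgren exponent is $p_{JL} = 1 + \frac{4}{N-4-2\sqrt{N-1}}$ if $N\ge 11$ and $p_{JL}=\infty$ if $3\le N\le 10$. For a solution $v$ (with exponent $p$) the radial Morse index $m(v)$ is the number of negative eigenvalues $\alpha$, counted with multiplicity, of the problem $-\Delta\phi + \phi - p v^{p-1}\phi = \alpha\phi$ in $B_R\setminus\{0\}$,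 $\partial_\nu\phi = 0$ on $\partial B_R$, $\phi$ radially symmetric. *)

From Stdlib Require Import Reals Lra List.
From Coquelicot Require Import Coquelicot.
Open Scope R_scope.

Definition p_S (N : nat) : R := (INR N + 2) / (INR N - 2).

Definition p_JL (N : nat) : Rbar :=
  if (11 <=? N)%nat
  then Finite (1 + 4 / (INR N - 4 - 2 * sqrt (INR N - 1)))
  else p_infty.

Definition theta (p : R) : R := 2 / (p - 1).

Definition A_pN (p : R) (N : nat) : R :=
  Rpower (theta p * (INR N - 2 - theta p)) (1 / (p - 1)).

(* u solves ( * )_p : classical C^2 solution on (0,oo) of
   -u'' - (N-1)/r u' + u = u^p, with r^theta u(r) -> A_{p,N} as r -> 0+, u > 0. *)
Definition singular_solution (N : nat) (p : R) (u : R -> R) : Prop :=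
  (forall r, 0 < r -> 0 < u r) /\
  (forall r, 0 < r ->
     ex_derive u r /\ ex_derive (Derive u) r /\
     - Derive (Derive u) r - (INR N - 1) / r * Derive u r + u r = Rpower (u r) p) /\
  filterlim (fun r => Rpower r (theta p) * u r) (at_right 0) (locally (A_pN p N)).

(* R = R_p^i : R is the i-th positive zero (in increasing order) of u'. *)
Definition ith_critical_radius (u : R -> R) (i : nat) (R0 : R) : Prop :=
  0 < R0 /\ Derive u R0 = 0 /\
  exists l : list R, NoDup l /\ length l = (i - 1)%nat /\
    forall r, In r l <-> (0 < r < R0 /\ Derive u r = 0).

(* Radial test functions on B_R \ {0}: C^1 on (0,oo) and vanishing near the origin
   (no boundary condition at r = R: the Neumann condition is natural). *)
Definition radial_test_fun (phi : R -> R) : Prop :=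
  (forall r, 0 < r -> ex_derive phi r /\ continuous (Derive phi) r) /\
  exists delta, 0 < delta /\ forall r, r < delta -> phi r = 0.

(* Quadratic form of  -Delta + 1 - p v^{p-1}  on radial functions in B_R
   (up to the positive constant |S^{N-1}|). *)
Definition Qform (N : nat) (p : R) (v : R -> R) (R0 : R) (phi : R -> R) : R :=
  RInt (fun r => (Derive phi r ^ 2 + phi r ^ 2 - p * Rpower (v r) (p - 1) * phi r ^ 2)
                 * r ^ (N - 1)) 0 R0.

Fixpoint lincomb (k : nat) (c : nat -> R) (phi : nat -> R -> R) (r : R) : R :=
  match k with
  | O => 0
  | S k' => lincomb k' c phi r + c k' * phi k' r
  end.

(* m(v) >= k : there is a k-dimensional space of radial test functions on which the
   quadratic form is negative definite (variational / min-max count of the negative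
   eigenvalues, with multiplicity, of the radial Neumann problem in B_R \ {0}). *)
Definition morse_index_ge (N : nat) (p : R) (v : R -> R) (R0 : R) (k : nat) : Prop :=
  exists phi : nat -> R -> R,
    (forall i, (i < k)%nat -> radial_test_fun (phi i)) /\
    forall c : nat -> R, (exists i, (i < k)%nat /\ c i <> 0) ->
      Qform N p v R0 (lincomb k c phi) < 0.

Definition morse_index_finite N p v R0 : Prop :=
  exists n : nat, forall k, morse_index_ge N p v R0 k -> (k <= n)%nat.

Definition morse_index_infinite N p v R0 : Prop :=
  forall k : nat, morse_index_ge N p v R0 k.

(** Along the singular solution the potential [V = p u^(p-1)] satisfies
    [r^2 V(r) -> p A^(p-1) = (theta+2)(N-2-theta)] as [r -> 0], and this limit is below
    the Hardy constant [((N-2)/2)^2] exactly when [p > p_JL].  Below it, the calibration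
    [(al r^(N-2) phi^2)'] with [al = (N-2)/2] makes the form nonnegative on [(0, rho)] for
    functions vanishing at [rho], and calibrations [k (r - x_(j+1)) phi^2] do the same on
    the cells of a fine mesh of [[rho, R]]; so a function vanishing at the finitely many
    nodes has nonnegative energy, which bounds the dimension of any negative space.
    Above it, the bumps [r^(-al) ((ln r - T)(T + L - ln r))_+^2] have negative energy
    once the window [L] is long and [T] is very negative, and shifting [T] gives
    infinitely many of them with disjoint supports. *)

From Stdlib Require Import Reals Lra Lia List Classical.
From Coquelicot Require Import Coquelicot.
Open Scope R_scope.

Lemma continuous_pow (f : R -> R) (n : nat) (x : R) :
  continuous f x -> continuous (fun y => f y ^ n) x.
Proof.
  intros Hf; induction n as [|n IH]; simpl.
  - apply continuous_const.
  - apply (continuous_mult f (fun y => f y ^ n)); assumption.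
Qed.

Lemma is_derive_Rpower (y x : R) :
  0 < x -> is_derive (fun z => Rpower z y) x (y * Rpower x (y - 1)).
Proof. intros Hx; apply is_derive_Reals, derivable_pt_lim_power; assumption. Qed.

Lemma ex_derive_continuous_R (f : R -> R) (x : R) : ex_derive f x -> continuous f x.
Proof. apply (@ex_derive_continuous R_AbsRing R_NormedModule). Qed.

Lemma continuous_Rpower (y x : R) : 0 < x -> continuous (fun z => Rpower z y) x.
Proof.
  intros Hx; apply ex_derive_continuous_R; eexists; apply is_derive_Rpower; assumption.
Qed.

Lemma Rpower_gt_0 (x y : R) : 0 < Rpower x y.
Proof. apply exp_pos. Qed.

Lemma locally_lt (d r : R) : r < d -> locally r (fun y => y < d).
Proof. intros Hr; apply (locally_interval _ r m_infty (Finite d)); simpl; auto. Qed.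

Lemma locally_gt (d r : R) : d < r -> locally r (fun y => d < y).
Proof. intros Hr; apply (locally_interval _ r (Finite d) p_infty); simpl; auto. Qed.

Lemma ln_of_nonpos (x : R) : x <= 0 -> ln x = 0.
Proof.
  intros Hx; unfold ln; destruct (Rlt_dec 0 x) as [Hlt|Hnlt]; [exfalso; lra|reflexivity].
Qed.

Lemma lt_ln_of_exp_lt (t r : R) : exp t < r -> t < ln r.
Proof.
  intros Hr; rewrite <- (ln_exp t) at 1; apply ln_increasing; [apply exp_pos|assumption].
Qed.

Lemma ln_lt_of_lt_exp (t r : R) : 0 < r -> r < exp t -> ln r < t.
Proof. intros Hr Hrt; rewrite <- (ln_exp t); apply ln_increasing; assumption. Qed.

Lemma exp_le_exp_of_le (x y : R) : x <= y -> exp x <= exp y.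
Proof.
  intros [Hlt|Heq]; [left; apply exp_increasing; assumption|right; rewrite Heq; reflexivity].
Qed.

Lemma ln_le_0 (b : R) : 0 < b -> b <= 1 -> ln b <= 0.
Proof.
  intros Hb Hb1; apply Rnot_lt_le; intros Hpos; apply exp_increasing in Hpos.
  rewrite exp_0, exp_ln in Hpos by assumption; lra.
Qed.

Lemma at_right_0_between (f : R -> R) (l a b : R) :
  filterlim f (at_right 0) (locally l) -> a < l < b ->
  exists rho, 0 < rho /\ forall r, 0 < r < rho -> a < f r < b.
Proof.
  intros Hf Hab.
  assert (Heps : 0 < Rmin (l - a) (b - l)) by (apply Rmin_pos; lra).
  destruct (proj1 (filterlim_locally f l) Hf (mkposreal _ Heps)) as [rho Hrho].
  exists rho; split; [apply cond_pos|]; intros r Hr.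
  assert (Hball : ball 0 rho r).
  { apply Rabs_lt_between; change (minus r 0) with (r - 0); lra. }
  specialize (Hrho r Hball (proj1 Hr)); apply Rabs_lt_between in Hrho.
  change (minus (f r) l) with (f r - l) in Hrho; simpl in Hrho.
  pose proof (Rmin_l (l - a) (b - l)); pose proof (Rmin_r (l - a) (b - l)); lra.
Qed.

Lemma Derive_zero_below (phi : R -> R) (d r : R) :
  (forall y, y < d -> phi y = 0) -> r < d -> is_derive phi r 0.
Proof.
  intros Hphi Hr; apply (is_derive_ext_loc (fun _ => 0)); [|apply (is_derive_const 0 r)].
  eapply filter_imp; [|apply (locally_lt d r Hr)]; intros y Hy; rewrite Hphi; auto.
Qed.

Lemma radial_test_fun_C1 (phi : R -> R) :
  radial_test_fun phi -> forall r, ex_derive phi r /\ continuous (Derive phi) r.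
Proof.
  intros [HC1 [d [Hd Hzero]]] r.
  destruct (Rlt_or_le r d) as [Hr|Hr]; [|apply HC1; lra].
  split; [eexists; apply (Derive_zero_below _ d); assumption|].
  apply (continuous_ext_loc _ (fun _ => 0)); [|apply continuous_const].
  eapply filter_imp; [|apply (locally_lt d r Hr)]; intros y Hy.
  symmetry; apply is_derive_unique, (Derive_zero_below _ d); assumption.
Qed.

Lemma lincomb_ext (k : nat) (c d : nat -> R) (f g : nat -> R -> R) (r s : R) :
  (forall i, (i < k)%nat -> c i * f i r = d i * g i s) -> lincomb k c f r = lincomb k d g s.
Proof.
  induction k as [|k IH]; intros Hfg; simpl; [reflexivity|].
  rewrite IH, (Hfg k) by (intros; first [lia | apply Hfg; lia]); reflexivity.
Qed.

Lemma lincomb_zero (k : nat) (c : nat -> R) (f : nat -> R -> R) (r : R) :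
  (forall i, (i < k)%nat -> c i * f i r = 0) -> lincomb k c f r = 0.
Proof.
  induction k as [|k IH]; intros Hf; simpl; [reflexivity|].
  rewrite IH, (Hf k) by (intros; first [lia | apply Hf; lia]); ring.
Qed.

Lemma lincomb_affine (k : nat) (c : nat -> R) (a b : R -> R) (f g : nat -> R -> R) (r : R) :
  lincomb k c (fun i y => a y * f i y + b y * g i y) r
  = a r * lincomb k c f r + b r * lincomb k c g r.
Proof. induction k as [|k IH]; simpl; [ring|rewrite IH; ring]. Qed.

Lemma Derive_lincomb (k : nat) (c : nat -> R) (phi : nat -> R -> R) (r : R) :
  (forall i, (i < k)%nat -> ex_derive (phi i) r) ->
  ex_derive (lincomb k c phi) r /\
  Derive (lincomb k c phi) r = lincomb k c (fun i => Derive (phi i)) r.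
Proof.
  induction k as [|k IH]; intros Hd; simpl.
  - split; [eexists; apply (is_derive_const 0 r)|apply Derive_const].
  - destruct IH as [IHex IHeq]; [intros; apply Hd; lia|].
    assert (Hk : ex_derive (fun y => c k * phi k y) r)
      by (apply ex_derive_scal, Hd; lia).
    split; [apply (ex_derive_plus (lincomb k c phi)); assumption|].
    rewrite (Derive_plus (lincomb k c phi)), Derive_scal, IHeq by assumption.
    reflexivity.
Qed.

Lemma radial_test_fun_lincomb (k : nat) (c : nat -> R) (phi : nat -> R -> R) :
  (forall i, (i < k)%nat -> radial_test_fun (phi i)) -> radial_test_fun (lincomb k c phi).
Proof.
  induction k as [|k IH]; intros Hphi.
  - split; [|exists 1; split; [lra|reflexivity]].
    intros r _; simpl; split; [eexists; apply (is_derive_const 0 r)|].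
    apply (continuous_ext (fun _ => 0)); [|apply continuous_const].
    intros y; symmetry; apply Derive_const.
  - destruct IH as [IHC1 [d [Hd IHzero]]]; [intros; apply Hphi; lia|].
    destruct (Hphi k (Nat.lt_succ_diag_r k)) as [HC1 [e [He Hzero]]].
    assert (HD : forall y, 0 < y ->
      ex_derive (lincomb (S k) c phi) y /\
      Derive (lincomb (S k) c phi) y = lincomb (S k) c (fun i => Derive (phi i)) y).
    { intros y Hy; apply Derive_lincomb; intros i Hi; apply Hphi; [lia|assumption]. }
    split.
    + intros r Hr; split; [apply (HD r Hr)|].
      apply (continuous_ext_loc _ (fun y => lincomb (S k) c (fun i => Derive (phi i)) y)).
      { eapply filter_imp; [|apply (locally_gt 0 r Hr)]; intros y Hy.
        symmetry; apply (HD y Hy). }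
      simpl; apply (continuous_plus (lincomb k c (fun i => Derive (phi i)))).
      * apply (continuous_ext_loc _ (Derive (lincomb k c phi))).
        -- eapply filter_imp; [|apply (locally_gt 0 r Hr)]; intros y Hy.
           apply Derive_lincomb; intros i Hi; apply Hphi; [lia|assumption].
        -- apply IHC1; assumption.
      * apply (continuous_mult (fun _ => c k)); [apply continuous_const|apply HC1; assumption].
    + exists (Rmin d e); split; [apply Rmin_pos; assumption|].
      intros r Hr; simpl; rewrite IHzero, Hzero; [ring| |];
        eapply Rlt_le_trans; eauto; [apply Rmin_r|apply Rmin_l].
Qed.

(** * Lower bounds for the quadratic form by calibration *)

Definition Qdensity (N : nat) (p : R) (v phi : R -> R) (r : R) : R :=
  (Derive phi r ^ 2 + phi r ^ 2 - p * Rpower (v r) (p - 1) * phi r ^ 2) * r ^ (N - 1).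

Lemma Qform_Qdensity (N : nat) (p : R) (v : R -> R) (R0 : R) (phi : R -> R) :
  Qform N p v R0 phi = RInt (Qdensity N p v phi) 0 R0.
Proof. reflexivity. Qed.

Lemma RInt_ge_calibration (F G dG phi : R -> R) (a b : R) :
  a <= b ->
  (forall x, a <= x <= b -> continuous F x) ->
  (forall x, a <= x <= b -> is_derive G x (dG x) /\ continuous dG x) ->
  (forall x, a <= x <= b -> ex_derive phi x /\ continuous (Derive phi) x) ->
  (forall x, a < x < b -> 0 <= F x + (dG x * phi x ^ 2 + G x * (2 * phi x * Derive phi x))) ->
  G a * phi a ^ 2 - G b * phi b ^ 2 <= RInt F a b.
Proof.
  intros Hab HF HG Hphi Hpt.
  set (dH := fun x => dG x * phi x ^ 2 + G x * (2 * phi x * Derive phi x)).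
  assert (IH : is_RInt dH a b (G b * phi b ^ 2 - G a * phi a ^ 2)).
  { apply (is_RInt_derive (fun x => G x * phi x ^ 2));
      rewrite Rmin_left, Rmax_right by assumption; intros x Hx;
      destruct (HG x Hx) as [HGx HdG]; destruct (Hphi x Hx) as [[l Hl] Hdphi];
      pose proof (is_derive_unique _ _ _ Hl) as El.
    - pose proof (is_derive_mult G (fun y => phi y ^ 2) x _ _ HGx
        (is_derive_pow phi 2 x l Hl) Rmult_comm) as D.
      unfold dH; rewrite El.
      replace (dG x * phi x ^ 2 + G x * (2 * phi x * l))
        with (plus (mult (dG x) (phi x ^ 2)) (mult (G x) (INR 2 * l * phi x ^ pred 2)));
        [exact D|simpl; unfold plus, mult; simpl; ring].
    - pose proof (ex_derive_continuous_R phi x (ex_intro _ l Hl)) as Cphi.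
      pose proof (ex_derive_continuous_R G x (ex_intro _ _ HGx)) as CG.
      apply (continuous_plus (fun y => dG y * phi y ^ 2)).
      + apply (continuous_mult dG); [|apply continuous_pow]; assumption.
      + apply (continuous_mult G); [assumption|].
        apply (continuous_mult (fun y => 2 * phi y)); [|assumption].
        apply (continuous_mult (fun _ => 2)); [apply continuous_const|assumption]. }
  assert (EF : ex_RInt F a b).
  { apply (@ex_RInt_continuous R_CompleteNormedModule).
    rewrite Rmin_left, Rmax_right by assumption; assumption. }
  assert (EH : ex_RInt dH a b) by (eexists; eassumption).
  assert (Hpos : 0 <= RInt (fun x => F x + dH x) a b).
  { apply RInt_ge_0; [assumption|apply (ex_RInt_plus F dH); assumption|].
    intros x Hx; apply Hpt; assumption. }
  rewrite (RInt_plus F dH), (is_RInt_unique _ _ _ _ IH) in Hpos by assumption.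
  change (plus ?x ?y) with (x + y) in Hpos; lra.
Qed.

Lemma hardy_square_completion (al X Y V q r : R) :
  0 <= q -> V * r ^ 2 <= al ^ 2 ->
  0 <= (X ^ 2 + Y ^ 2 - V * Y ^ 2) * (q * r ^ 2)
       + (al * (2 * al) * q * Y ^ 2 + al * (q * r) * (2 * Y * X)).
Proof.
  intros Hq HV.
  replace ((X ^ 2 + Y ^ 2 - V * Y ^ 2) * (q * r ^ 2)
           + (al * (2 * al) * q * Y ^ 2 + al * (q * r) * (2 * Y * X)))
    with (q * ((r * X + al * Y) ^ 2 + (al ^ 2 - V * r ^ 2) * Y ^ 2 + r ^ 2 * Y ^ 2))
    by ring.
  apply Rmult_le_pos; [assumption|].
  pose proof (pow2_ge_0 (r * X + al * Y)); pose proof (pow2_ge_0 Y);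
    pose proof (pow2_ge_0 r); nra.
Qed.

Lemma cell_square_completion (X Y V M w e W k d : R) :
  0 < e <= w -> w <= W -> V <= M -> 0 <= M -> k = 2 * M * W + 1 -> d ^ 2 <= e / (2 * k) ->
  0 <= (X ^ 2 + Y ^ 2 - V * Y ^ 2) * w + (k * Y ^ 2 + k * d * (2 * Y * X)).
Proof.
  intros He HW HV HM Hk Hd.
  assert (Hk0 : 0 < k) by nra.
  assert (Hkd : k * d ^ 2 <= w / 2).
  { assert (d ^ 2 * (2 * k) <= e / (2 * k) * (2 * k)) by (apply Rmult_le_compat_r; lra).
    replace (e / (2 * k) * (2 * k)) with e in H by (field; lra). lra. }
  replace ((X ^ 2 + Y ^ 2 - V * Y ^ 2) * w + (k * Y ^ 2 + k * d * (2 * Y * X)))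
    with (((w * X + k * d * Y) ^ 2 + (k * w - k * (k * d ^ 2) + w ^ 2 - V * w ^ 2) * Y ^ 2) / w)
    by (field; lra).
  apply Rmult_le_pos; [|left; apply Rinv_0_lt_compat; lra].
  assert (k * (k * d ^ 2) <= k * (w / 2)) by (apply Rmult_le_compat_l; lra).
  assert (V * w ^ 2 <= M * w ^ 2) by (apply Rmult_le_compat_r; [apply pow2_ge_0|lra]).
  assert (M * w ^ 2 <= M * W * w)
    by (replace (M * w ^ 2) with (M * w * w) by ring; apply Rmult_le_compat_r; nra).
  pose proof (pow2_ge_0 (w * X + k * d * Y)); pose proof (pow2_ge_0 Y).
  assert (0 <= k * w - k * (k * d ^ 2) + w ^ 2 - V * w ^ 2) by nra.
  nra.
Qed.

Lemma RInt_ge_0_subdivision (f : R -> R) (a : R) (x : nat -> R) (m : nat) :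
  (forall y z, ex_RInt f y z) -> 0 <= RInt f a (x O) ->
  (forall j, (j < m)%nat -> 0 <= RInt f (x j) (x (S j))) -> 0 <= RInt f a (x m).
Proof.
  intros Hf H0 Hcells; induction m as [|m IH]; [assumption|].
  rewrite <- (RInt_Chasles f a (x m) (x (S m))) by apply Hf.
  pose proof (Hcells m (Nat.lt_succ_diag_r m)).
  assert (0 <= RInt f a (x m)) by (apply IH; intros; apply Hcells; lia).
  change (plus ?y ?z) with (y + z); lra.
Qed.

Lemma RInt_eq_0_on (f : R -> R) (a b : R) :
  a <= b -> (forall y, a < y < b -> f y = 0) -> RInt f a b = 0.
Proof.
  intros Hab Hf; rewrite (RInt_ext f (fun _ => 0)), RInt_const.
  - apply Rmult_0_r.
  - intros y Hy; rewrite Rmin_left, Rmax_right in Hy by assumption; apply Hf; assumption.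
Qed.

Lemma exists_mesh_size (L eps : R) :
  0 < eps -> exists m : nat, (1 <= m)%nat /\ (L / INR m) ^ 2 <= eps.
Proof.
  intros Heps; destruct (INR_unbounded (L ^ 2 / eps)) as [m0 Hm0].
  exists (S m0); split; [lia|].
  rewrite S_INR; set (t := INR m0 + 1).
  assert (Ht : 1 <= t) by (pose proof (pos_INR m0); unfold t; lra).
  assert (HL : L ^ 2 <= eps * t).
  { assert (L ^ 2 / eps * eps < t * eps) by (apply Rmult_lt_compat_r; unfold t; lra).
    replace (L ^ 2 / eps * eps) with (L ^ 2) in H by (field; lra); lra. }
  replace ((L / t) ^ 2) with (L ^ 2 / t ^ 2) by (field; lra).
  apply Rle_div_l; nra.
Qed.

Section Qdensity_nonneg.

Variables (p : R) (v : R -> R).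
Hypothesis v_cont_pos : forall r, 0 < r -> continuous v r /\ 0 < v r.

Lemma Qdensity_continuous (N : nat) (phi : R -> R) (r : R) :
  radial_test_fun phi -> continuous (Qdensity N p v phi) r.
Proof.
  intros Hphi; pose proof (radial_test_fun_C1 phi Hphi) as HC1.
  destruct Hphi as [_ [d [Hd Hzero]]].
  destruct (Rlt_or_le r d) as [Hr|Hr].
  - apply (continuous_ext_loc _ (fun _ => 0)); [|apply continuous_const].
    eapply filter_imp; [|apply (locally_lt d r Hr)]; intros y Hy; unfold Qdensity.
    rewrite (is_derive_unique _ _ _ (Derive_zero_below phi d y Hzero Hy)), Hzero by assumption.
    simpl; ring.
  - destruct (v_cont_pos r) as [Cv Hv]; [lra|].
    destruct (HC1 r) as [Hex CDphi].
    pose proof (ex_derive_continuous_R phi r Hex) as Cphi.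
    unfold Qdensity.
    apply (continuous_mult
      (fun y => Derive phi y ^ 2 + phi y ^ 2 - p * Rpower (v y) (p - 1) * phi y ^ 2));
      [|apply continuous_pow, continuous_id].
    apply (continuous_minus (fun y => Derive phi y ^ 2 + phi y ^ 2)).
    + apply (continuous_plus (fun y => Derive phi y ^ 2)); apply continuous_pow; assumption.
    + apply (continuous_mult (fun y => p * Rpower (v y) (p - 1)));
        [|apply continuous_pow; assumption].
      apply (continuous_mult (fun _ => p)); [apply continuous_const|].
      apply (continuous_comp v (fun z => Rpower z (p - 1))); [assumption|].
      apply continuous_Rpower; assumption.
Qed.

Lemma ex_RInt_Qdensity (N : nat) (phi : R -> R) (a b : R) :
  radial_test_fun phi -> ex_RInt (Qdensity N p v phi) a b.
Proof.
  intros Hphi; apply (@ex_RInt_continuous R_CompleteNormedModule); intros.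
  apply Qdensity_continuous; assumption.
Qed.

Lemma RInt_Qdensity_ge_0_hardy (N : nat) (rho : R) (phi : R -> R) :
  (3 <= N)%nat -> radial_test_fun phi -> 0 < rho -> phi rho = 0 ->
  (forall r, 0 < r < rho -> p * Rpower (v r) (p - 1) * r ^ 2 <= ((INR N - 2) / 2) ^ 2) ->
  0 <= RInt (Qdensity N p v phi) 0 rho.
Proof.
  intros HN Hphi Hrho Hphi_rho HV.
  destruct N as [|[|[|n]]]; [lia..|].
  replace (INR (S (S (S n))) - 2) with (INR (S n)) in HV by (rewrite !S_INR; ring).
  set (al := INR (S n) / 2) in HV.
  assert (Hphi0 : phi 0 = 0) by (destruct Hphi as [_ [d [Hd Hz]]]; apply Hz; assumption).
  eapply Rle_trans;
    [|apply (RInt_ge_calibration _ (fun r => al * r ^ S n) (fun r => al * (2 * al) * r ^ n))].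
  - rewrite Hphi0, Hphi_rho; lra.
  - lra.
  - intros; apply Qdensity_continuous; assumption.
  - intros x _; split.
    + auto_derive; [trivial|]; unfold al; rewrite S_INR; destruct n; simpl; field.
    + apply ex_derive_continuous_R; auto_derive; trivial.
  - intros x _; apply radial_test_fun_C1; assumption.
  - intros y Hy; unfold Qdensity; simpl (S (S (S n)) - 1)%nat.
    replace (y ^ S (S n)) with (y ^ n * y ^ 2) by (simpl; ring).
    replace (y ^ S n) with (y ^ n * y) by (simpl; ring).
    apply (hardy_square_completion al _ _ (p * Rpower (v y) (p - 1))); [apply pow_le; lra|].
    apply HV; assumption.
Qed.

(* Calibrated by [k (r - b) phi^2] with [k = 2 M W + 1]; the mesh bound keeps
   [k^2 (r - b)^2] below [k r^(N-1) / 2]. *)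
Lemma RInt_Qdensity_ge_0_cell (N : nat) (a b e W M : R) (phi : R -> R) :
  radial_test_fun phi -> 0 < a <= b -> 0 < e <= a ^ (N - 1) -> b ^ (N - 1) <= W ->
  0 <= M -> (forall r, a <= r <= b -> p * Rpower (v r) (p - 1) <= M) ->
  (b - a) ^ 2 <= e / (2 * (2 * M * W + 1)) -> phi a = 0 ->
  0 <= RInt (Qdensity N p v phi) a b.
Proof.
  intros Hphi Hab He HW HM HV Hmesh Hphi_a.
  set (k := 2 * M * W + 1) in Hmesh.
  eapply Rle_trans;
    [|apply (RInt_ge_calibration _ (fun r => k * (r - b)) (fun _ => k))].
  - rewrite Hphi_a; replace (b - b) with 0 by ring; lra.
  - lra.
  - intros; apply Qdensity_continuous; assumption.
  - intros x _; split; [|apply continuous_const].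
    auto_derive; [trivial|ring].
  - intros x _; apply radial_test_fun_C1; assumption.
  - intros y Hy; unfold Qdensity.
    apply (cell_square_completion _ _ _ M _ e W); [split| | |assumption|reflexivity|].
    + lra.
    + apply Rle_trans with (a ^ (N - 1)); [lra|apply pow_incr; lra].
    + apply Rle_trans with (b ^ (N - 1)); [apply pow_incr; lra|assumption].
    + apply HV; lra.
    + apply Rle_trans with ((b - a) ^ 2); [nra|assumption].
Qed.

Lemma Qform_ge_0_on_mesh (N : nat) (R0 rho M : R) :
  (3 <= N)%nat -> 0 < rho < R0 -> 0 <= M ->
  (forall r, rho <= r <= R0 -> p * Rpower (v r) (p - 1) <= M) ->
  (forall r, 0 < r < rho -> p * Rpower (v r) (p - 1) * r ^ 2 <= ((INR N - 2) / 2) ^ 2) ->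
  exists xs : list R, forall psi, radial_test_fun psi ->
    (forall x, In x xs -> psi x = 0) -> 0 <= Qform N p v R0 psi.
Proof.
  intros HN Hrho HM HVM HVH.
  set (e := rho ^ (N - 1)); set (W := R0 ^ (N - 1)).
  assert (He : 0 < e) by (apply pow_lt; lra).
  assert (HW : 0 <= W) by (apply pow_le; lra).
  destruct (exists_mesh_size (R0 - rho) (e / (2 * (2 * M * W + 1)))) as [m [Hm Hh]].
  { apply Rdiv_lt_0_compat; nra. }
  set (h := (R0 - rho) / INR m) in Hh.
  set (x := fun j => rho + INR j * h).
  assert (Hh0 : 0 < h) by (apply Rdiv_lt_0_compat; [lra|apply lt_0_INR; lia]).
  assert (Hx_ge : forall j, rho <= x j) by (intros j; pose proof (pos_INR j); unfold x; nra).
  assert (Hxm : x m = R0) by (unfold x, h; field; apply not_0_INR; lia).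
  assert (Hx_le : forall j, (j <= m)%nat -> x j <= R0).
  { intros j Hj; apply le_INR in Hj; rewrite <- Hxm; unfold x.
    apply Rplus_le_compat_l, Rmult_le_compat_r; lra. }
  exists (map x (seq 0 m)); intros psi Hpsi Hzero.
  assert (Hpsi_x : forall j, (j < m)%nat -> psi (x j) = 0).
  { intros j Hj; apply Hzero, in_map, in_seq; lia. }
  rewrite Qform_Qdensity, <- Hxm.
  apply RInt_ge_0_subdivision; [intros; apply ex_RInt_Qdensity; assumption| |].
  - replace (x 0%nat) with rho by (unfold x; simpl; ring).
    apply (RInt_Qdensity_ge_0_hardy N rho); try assumption; [lra|].
    replace rho with (x 0%nat) by (unfold x; simpl; ring); apply Hpsi_x; lia.
  - intros j Hj.
    apply (RInt_Qdensity_ge_0_cell N (x j) (x (S j)) e W M); try assumption.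
    + pose proof (Hx_ge j); unfold x in *; rewrite S_INR; lra.
    + split; [assumption|apply pow_incr; pose proof (Hx_ge j); lra].
    + apply pow_incr; pose proof (Hx_le (S j) Hj); pose proof (Hx_ge (S j)); lra.
    + intros r Hr; apply HVM; pose proof (Hx_le (S j) Hj); pose proof (Hx_ge j); lra.
    + replace (x (S j) - x j) with h by (unfold x; rewrite S_INR; ring); assumption.
    + apply Hpsi_x; assumption.
Qed.

End Qdensity_nonneg.

(** * Finite Morse index below the Hardy constant *)

Lemma lincomb_vanishing_at (k : nat) (phi : nat -> R -> R) (xs : list R) :
  (length xs < k)%nat ->
  exists c : nat -> R, (exists i, (i < k)%nat /\ c i <> 0) /\
    forall x, In x xs -> lincomb k c phi x = 0.
Proof.
  revert phi xs; induction k as [|k IH]; intros phi xs Hlen; [lia|].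
  destruct (classic (exists x0, In x0 xs /\ phi k x0 <> 0)) as [[x0 [Hx0 Hpiv]]|Hno].
  - destruct (in_split x0 xs Hx0) as [l1 [l2 ->]].
    set (a := phi k x0).
    destruct (IH (fun i y => a * phi i y + - phi k y * phi i x0) (l1 ++ l2))
      as [c [[i0 [Hi0 Hci0]] Hc]];
      [rewrite length_app in *; simpl in Hlen; lia|].
    set (t := - lincomb k c phi x0 / a).
    exists (fun i => if (i =? k)%nat then t else c i); split.
    + exists i0; split; [lia|].
      destruct (Nat.eqb_spec i0 k); [lia|assumption].
    + assert (Hred : forall x, a * (lincomb k c phi x + t * phi k x)
                 = lincomb k c (fun i y => a * phi i y + - phi k y * phi i x0) x).
      { intros x.
        pose proof (lincomb_affine k c (fun _ => a) (fun y => - phi k y) phi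
                      (fun i _ => phi i x0) x) as Haff; cbv beta in Haff.
        rewrite Haff, (lincomb_ext k c c (fun i _ => phi i x0) phi x x0) by reflexivity.
        unfold t; field; assumption. }
      intros x Hx; simpl; rewrite Nat.eqb_refl.
      rewrite (lincomb_ext k _ c phi phi x x)
        by (intros i Hi; destruct (Nat.eqb_spec i k); [lia|reflexivity]).
      apply (Rmult_eq_reg_l a); [|assumption]; rewrite Rmult_0_r, Hred.
      apply in_app_or in Hx; destruct Hx as [Hx|[<-|Hx]]; try (apply Hc, in_or_app; tauto).
      rewrite <- Hred; unfold t, a; field; assumption.
  - exists (fun i => if (i =? k)%nat then 1 else 0); split.
    + exists k; split; [lia|]; rewrite Nat.eqb_refl; lra.
    + intros x Hx; simpl; rewrite Nat.eqb_refl, lincomb_zero.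
      * assert (phi k x = 0) by (apply NNPP; intros Hne; apply Hno; exists x; tauto).
        lra.
      * intros i Hi; destruct (Nat.eqb_spec i k); [lia|ring].
Qed.

Lemma morse_index_finite_of_Qform_ge_0 (N : nat) (p : R) (v : R -> R) (R0 : R) (xs : list R) :
  (forall psi, radial_test_fun psi -> (forall x, In x xs -> psi x = 0) ->
     0 <= Qform N p v R0 psi) ->
  morse_index_finite N p v R0.
Proof.
  intros Hnonneg; exists (length xs); intros k [phi [Hphi Hneg]].
  destruct (Nat.le_gt_cases k (length xs)) as [Hk|Hk]; [assumption|exfalso].
  destruct (lincomb_vanishing_at k phi xs Hk) as [c [Hc Hvanish]].
  apply (Rlt_not_le _ _ (Hneg c Hc)), Hnonneg; [|assumption].
  apply radial_test_fun_lincomb; assumption.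
Qed.

Lemma morse_index_finite_of_limit_lt_hardy (N : nat) (p : R) (v : R -> R) (R0 l : R) :
  (3 <= N)%nat -> 0 < R0 -> (forall r, 0 < r -> continuous v r /\ 0 < v r) ->
  filterlim (fun r => p * Rpower (v r) (p - 1) * r ^ 2) (at_right 0) (locally l) ->
  l < ((INR N - 2) / 2) ^ 2 -> morse_index_finite N p v R0.
Proof.
  intros HN HR0 Hv Hlim Hl.
  destruct (at_right_0_between _ l (l - 1) (((INR N - 2) / 2) ^ 2) Hlim)
    as [rho1 [Hrho1 Hnear]]; [lra|].
  set (rho := Rmin rho1 R0 / 2).
  assert (Hrho : 0 < rho < R0) by (pose proof (Rmin_r rho1 R0);
    pose proof (Rmin_pos rho1 R0 Hrho1 HR0); unfold rho; lra).
  assert (Hrho_rho1 : rho < rho1) by (pose proof (Rmin_l rho1 R0);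
    pose proof (Rmin_pos rho1 R0 Hrho1 HR0); unfold rho; lra).
  set (V := fun r => p * Rpower (v r) (p - 1)).
  destruct (continuity_ab_maj V rho R0) as [rM [HrM _]]; [lra|..].
  { intros r Hr; apply continuity_pt_filterlim; change (continuous V r); unfold V.
    destruct (Hv r) as [Cv Hvr]; [lra|].
    apply (continuous_mult (fun _ => p)); [apply continuous_const|].
    apply (continuous_comp v (fun z => Rpower z (p - 1))); [assumption|].
    apply continuous_Rpower; assumption. }
  destruct (Qform_ge_0_on_mesh p v Hv N R0 rho (Rmax 0 (V rM))) as [xs Hxs];
    [assumption|assumption|apply Rmax_l| | |].
  - intros r Hr; eapply Rle_trans; [apply (HrM r Hr)|apply Rmax_r].
  - intros r Hr; left; apply Hnear; lra.
  - apply (morse_index_finite_of_Qform_ge_0 N p v R0 xs Hxs).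
Qed.

(** * Logarithmic bumps *)

Definition sq_pos_part (x : R) : R := Rmax 0 x ^ 2.

Lemma continuous_Rmax_0 (x : R) : continuous (fun y => Rmax 0 y) x.
Proof.
  apply (continuous_ext (fun y => (y + Rabs y) / 2)).
  - intros y; unfold Rmax; destruct (Rle_dec 0 y);
      [rewrite Rabs_right|rewrite Rabs_left]; lra.
  - apply (continuous_mult (fun y => y + Rabs y) (fun _ => / 2)); [|apply continuous_const].
    apply (continuous_plus (fun y : R => y) Rabs); [apply continuous_id|apply continuous_Rabs].
Qed.

Lemma is_derive_sq_pos_part (x : R) : is_derive sq_pos_part x (2 * Rmax 0 x).
Proof.
  destruct (Rtotal_order x 0) as [Hx|[->|Hx]].
  - rewrite Rmax_left by lra.
    apply (is_derive_ext_loc (fun _ => 0)); [|replace (2 * 0) with 0 by ring; apply (is_derive_const 0 x)].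
    eapply filter_imp; [|apply (locally_lt 0 x Hx)]; intros y Hy.
    unfold sq_pos_part; rewrite Rmax_left by lra; simpl; ring.
  - rewrite Rmax_left by lra; apply is_derive_Reals.
    intros eps Heps; exists (mkposreal eps Heps); intros h Hh0 Hh; simpl in Hh.
    unfold sq_pos_part; rewrite Rplus_0_l, (Rmax_left 0 0) by lra.
    unfold Rmax; destruct (Rle_dec 0 h).
    + replace ((h ^ 2 - 0 ^ 2) / h - 2 * 0) with h by (field; assumption).
      pose proof (RRle_abs h); rewrite Rabs_right; lra.
    + replace ((0 ^ 2 - 0 ^ 2) / h - 2 * 0) with 0 by (field; assumption).
      rewrite Rabs_R0; lra.
  - rewrite Rmax_right by lra.
    apply (is_derive_ext_loc (fun y => y ^ 2)); [|auto_derive; [trivial|ring]].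
    eapply filter_imp; [|apply (locally_gt 0 x Hx)]; intros y Hy.
    unfold sq_pos_part; rewrite Rmax_right by lra; reflexivity.
Qed.

Definition log_window (T L t : R) : R := (t - T) * (T + L - t).

Lemma log_window_nonpos (T L t : R) :
  0 <= L -> t <= T \/ T + L <= t -> log_window T L t <= 0.
Proof. intros HL [Ht|Ht]; unfold log_window; nra. Qed.

Definition log_bump (al T L r : R) : R :=
  Rpower r (- al) * sq_pos_part (log_window T L (ln r)).

Definition log_bump_deriv (al T L r : R) : R :=
  Rpower r (- al) * (2 * Rmax 0 (log_window T L (ln r)) * (2 * T + L - 2 * ln r)
                     - al * sq_pos_part (log_window T L (ln r))) / r.

Lemma is_derive_log_bump (al T L r : R) :
  0 < r -> is_derive (log_bump al T L) r (log_bump_deriv al T L r).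
Proof.
  intros Hr.
  assert (Hwin : is_derive (fun y => log_window T L (ln y)) r ((2 * T + L - 2 * ln r) / r)).
  { unfold log_window; auto_derive; [lra|field; lra]. }
  pose proof (is_derive_comp sq_pos_part (fun y => log_window T L (ln y)) r _ _
                (is_derive_sq_pos_part _) Hwin) as Hsq.
  pose proof (is_derive_mult (fun y => Rpower y (- al)) _ r _ _
                (is_derive_Rpower (- al) r Hr) Hsq Rmult_comm) as D.
  unfold log_bump; replace (log_bump_deriv al T L r)
    with (plus (mult (- al * Rpower r (- al - 1)) (sq_pos_part (log_window T L (ln r))))
               (mult (Rpower r (- al))
                     (scal ((2 * T + L - 2 * ln r) / r) (2 * Rmax 0 (log_window T L (ln r))))));
    [exact D|].
  unfold log_bump_deriv; simpl; unfold plus, mult, scal; simpl; unfold mult; simpl.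
  replace (- al - 1) with (- al + - (1)) by ring.
  rewrite Rpower_plus, (Rpower_Ropp r 1), Rpower_1 by assumption.
  field; lra.
Qed.

Lemma log_bump_vanishing (al T L r : R) :
  0 < r -> log_window T L (ln r) <= 0 ->
  log_bump al T L r = 0 /\ Derive (log_bump al T L) r = 0.
Proof.
  intros Hr Hwin.
  rewrite (is_derive_unique _ _ _ (is_derive_log_bump al T L r Hr)).
  unfold log_bump, log_bump_deriv, sq_pos_part; rewrite Rmax_left by assumption.
  split; [ring|field; lra].
Qed.

(* [ln] is 0 on nonpositive reals, so the window must also be nonpositive at 0. *)
Lemma log_bump_radial_test_fun (al T L : R) :
  0 < L -> T + L <= 0 -> radial_test_fun (log_bump al T L).
Proof.
  intros HL HTL; split.
  - intros r Hr; split; [eexists; apply is_derive_log_bump; assumption|].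
    apply (continuous_ext_loc _ (log_bump_deriv al T L)).
    { eapply filter_imp; [|apply (locally_gt 0 r Hr)]; intros y Hy.
      symmetry; apply is_derive_unique, is_derive_log_bump; assumption. }
    assert (Cwin : continuous (fun y => log_window T L (ln y)) r).
    { apply ex_derive_continuous_R; unfold log_window; auto_derive; lra. }
    unfold log_bump_deriv.
    apply (continuous_mult (fun y => Rpower y (- al) * _)
             (fun y => / y)); [|apply ex_derive_continuous_R; auto_derive; lra].
    apply (continuous_mult (fun y => Rpower y (- al))); [apply continuous_Rpower; assumption|].
    apply (continuous_minus (fun y => 2 * Rmax 0 (log_window T L (ln y)) * (2 * T + L - 2 * ln y))).
    + apply (continuous_mult (fun y => 2 * Rmax 0 (log_window T L (ln y)))).
      * apply (continuous_mult (fun _ => 2)); [apply continuous_const|].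
        apply (continuous_comp (fun y => log_window T L (ln y)) (fun z => Rmax 0 z));
          [assumption|apply continuous_Rmax_0].
      * apply ex_derive_continuous_R; auto_derive; lra.
    + apply (continuous_mult (fun _ => al)); [apply continuous_const|].
      apply (continuous_comp (fun y => log_window T L (ln y)) sq_pos_part); [assumption|].
      apply ex_derive_continuous_R; eexists; apply is_derive_sq_pos_part.
  - exists (exp T); split; [apply exp_pos|]; intros r Hr.
    destruct (Rle_or_lt r 0) as [Hr0|Hr0].
    + unfold log_bump, sq_pos_part; rewrite (ln_of_nonpos r Hr0), Rmax_left; [ring|].
      apply log_window_nonpos; [lra|right; lra].
    + apply log_bump_vanishing; [assumption|].
      apply log_window_nonpos; [lra|left; apply Rlt_le, ln_lt_of_lt_exp; assumption].
Qed.

Definition bump_profile (L s : R) : R := s ^ 2 * (L - s) ^ 2.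

Definition bump_profile_deriv (L s : R) : R := 2 * s * (L - s) * (L - 2 * s).

Definition bump_energy_density (L al be s : R) : R :=
  bump_profile_deriv L s ^ 2 - 2 * al * bump_profile L s * bump_profile_deriv L s
  - be / 2 * bump_profile L s ^ 2.

(* The two polynomials are primitives of [P'^2] and [P^2]; the cross term [2 P P']
   integrates to [P^2]. *)
Definition bump_energy_primitive (L al be s : R) : R :=
  (4 * L ^ 4 * s ^ 3 / 3 - 6 * L ^ 3 * s ^ 4 + 52 * L ^ 2 * s ^ 5 / 5 - 8 * L * s ^ 6
   + 16 * s ^ 7 / 7)
  - al * bump_profile L s ^ 2
  - be / 2 * (L ^ 4 * s ^ 5 / 5 - 2 * L ^ 3 * s ^ 6 / 3 + 6 * L ^ 2 * s ^ 7 / 7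
              - L * s ^ 8 / 2 + s ^ 9 / 9).

Lemma is_derive_bump_energy_primitive (L al be s : R) :
  is_derive (bump_energy_primitive L al be) s (bump_energy_density L al be s).
Proof.
  unfold bump_energy_primitive, bump_energy_density, bump_profile, bump_profile_deriv.
  auto_derive; [trivial|field].
Qed.

Lemma bump_energy_primitive_increment (L al be : R) :
  bump_energy_primitive L al be L - bump_energy_primitive L al be 0
  = L ^ 7 * (24 - be * L ^ 2) / 1260.
Proof. unfold bump_energy_primitive, bump_profile; field. Qed.

Lemma log_bump_density_algebra (E w y X Y V c2 al : R) :
  0 < y -> E ^ 2 * w = y -> c2 <= V * y ^ 2 -> y ^ 2 <= (c2 - al ^ 2) / 2 ->
  ((E * (X - al * Y) / y) ^ 2 + (E * Y) ^ 2 - V * (E * Y) ^ 2) * w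
  <= (X ^ 2 - 2 * al * Y * X - (c2 - al ^ 2) / 2 * Y ^ 2) / y.
Proof.
  intros Hy HE HV Hy2.
  replace (((E * (X - al * Y) / y) ^ 2 + (E * Y) ^ 2 - V * (E * Y) ^ 2) * w)
    with (E ^ 2 * w * ((X - al * Y) ^ 2 / y ^ 2 + Y ^ 2 - V * Y ^ 2))
    by (field; lra).
  rewrite HE.
  assert (0 <= Y ^ 2 / y * (V * y ^ 2 - c2 + (c2 - al ^ 2) / 2 - y ^ 2)).
  { apply Rmult_le_pos; [|lra].
    apply Rmult_le_pos; [apply pow2_ge_0|left; apply Rinv_0_lt_compat; assumption]. }
  apply Rminus_le_0; replace ((X ^ 2 - 2 * al * Y * X - (c2 - al ^ 2) / 2 * Y ^ 2) / y
    - y * ((X - al * Y) ^ 2 / y ^ 2 + Y ^ 2 - V * Y ^ 2))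
    with (Y ^ 2 / y * (V * y ^ 2 - c2 + (c2 - al ^ 2) / 2 - y ^ 2)) by (field; lra).
  assumption.
Qed.

Lemma Rpower_hardy_weight (N : nat) (y : R) :
  (1 <= N)%nat -> 0 < y -> Rpower y (- ((INR N - 2) / 2)) ^ 2 * y ^ (N - 1) = y.
Proof.
  intros HN Hy.
  rewrite <- (Rpower_pow (N - 1) y Hy),
    <- (Rpower_pow 2 (Rpower y (- ((INR N - 2) / 2)))) by apply Rpower_gt_0.
  rewrite Rpower_mult, <- Rpower_plus, minus_INR by assumption.
  replace (- ((INR N - 2) / 2) * INR 2 + (INR N - INR 1)) with 1 by (simpl; field).
  apply Rpower_1; assumption.
Qed.

Lemma is_RInt_bump_energy_density (L al be T : R) :
  0 < L ->
  is_RInt (fun r => bump_energy_density L al be (ln r - T) / r) (exp T) (exp (T + L))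
          (L ^ 7 * (24 - be * L ^ 2) / 1260).
Proof.
  intros HL.
  replace (L ^ 7 * (24 - be * L ^ 2) / 1260)
    with (minus (bump_energy_primitive L al be (ln (exp (T + L)) - T))
                (bump_energy_primitive L al be (ln (exp T) - T))).
  2: { rewrite !ln_exp, <- (bump_energy_primitive_increment L al be).
       change (minus ?x ?y) with (x - y); do 2 f_equal; ring. }
  assert (Hab : exp T < exp (T + L)) by (apply exp_increasing; lra).
  pose proof (exp_pos T).
  apply (is_RInt_derive (fun r => bump_energy_primitive L al be (ln r - T)));
    rewrite Rmin_left, Rmax_right by lra; intros x Hx.
  - assert (Hln : is_derive (fun r => ln r - T) x (/ x)) by (auto_derive; lra).
    pose proof (is_derive_comp _ _ x _ _ (is_derive_bump_energy_primitive L al be _) Hln) as D.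
    replace (bump_energy_density L al be (ln x - T) / x)
      with (scal (/ x) (bump_energy_density L al be (ln x - T)));
      [exact D|unfold scal; simpl; unfold mult; simpl; field; lra].
  - apply ex_derive_continuous_R.
    unfold bump_energy_density, bump_profile, bump_profile_deriv; auto_derive; lra.
Qed.

Section log_bump_energy.

Variables (N : nat) (p : R) (v : R -> R).
Hypothesis N_ge_1 : (1 <= N)%nat.
Let al := (INR N - 2) / 2.

(* With [s = ln r - T] the bump is [r^(-al) P(s)], and [al = (N-2)/2] makes the
   weight [r^(N-1)] cancel against [r^(-2 al)], leaving the measure [dr / r = ds]. *)
Lemma Qdensity_log_bump_le (T L c2 r : R) :
  exp T < r < exp (T + L) ->
  c2 <= p * Rpower (v r) (p - 1) * r ^ 2 -> r ^ 2 <= (c2 - al ^ 2) / 2 ->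
  Qdensity N p v (log_bump al T L) r
  <= bump_energy_density L al (c2 - al ^ 2) (ln r - T) / r.
Proof.
  intros Hr HV Hr2.
  assert (Hr0 : 0 < r) by (pose proof (exp_pos T); lra).
  set (s := ln r - T).
  assert (Hs : 0 < s < L).
  { unfold s; split.
    - pose proof (lt_ln_of_exp_lt T r (proj1 Hr)); lra.
    - pose proof (ln_lt_of_lt_exp (T + L) r Hr0 (proj2 Hr)); lra. }
  assert (Hwin : log_window T L (ln r) = s * (L - s)) by (unfold log_window, s; ring).
  assert (Hmax : Rmax 0 (log_window T L (ln r)) = s * (L - s))
    by (rewrite Hwin; apply Rmax_right, Rlt_le, Rmult_lt_0_compat; lra).
  unfold Qdensity; rewrite (is_derive_unique _ _ _ (is_derive_log_bump al T L r Hr0)).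
  unfold log_bump_deriv, log_bump, sq_pos_part; rewrite Hmax.
  replace (2 * (s * (L - s)) * (2 * T + L - 2 * ln r)) with (bump_profile_deriv L s)
    by (unfold bump_profile_deriv, s; ring).
  replace ((s * (L - s)) ^ 2) with (bump_profile L s) by (unfold bump_profile; ring).
  unfold bump_energy_density.
  apply log_bump_density_algebra; try assumption.
  apply Rpower_hardy_weight; assumption.
Qed.

Hypothesis v_cont_pos : forall r, 0 < r -> continuous v r /\ 0 < v r.

Lemma Qform_log_bump (R0 T L : R) :
  0 < L -> T + L <= 0 -> exp (T + L) <= R0 ->
  Qform N p v R0 (log_bump al T L) = RInt (Qdensity N p v (log_bump al T L)) (exp T) (exp (T + L)).
Proof.
  intros HL HTL HR0.
  set (F := Qdensity N p v (log_bump al T L)).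
  pose proof (exp_pos T) as Ha.
  assert (Hab : exp T < exp (T + L)) by (apply exp_increasing; lra).
  assert (Hint : forall x y, ex_RInt F x y)
    by (intros; apply ex_RInt_Qdensity, log_bump_radial_test_fun; assumption).
  assert (Hout : forall y, 0 < y -> log_window T L (ln y) <= 0 -> F y = 0).
  { intros y Hy Hwin; destruct (log_bump_vanishing al T L y Hy Hwin) as [H0 H1].
    unfold F, Qdensity; rewrite H0, H1; ring. }
  rewrite Qform_Qdensity; fold F.
  rewrite <- (RInt_Chasles F 0 (exp T) R0), <- (RInt_Chasles F (exp T) (exp (T + L)) R0)
    by apply Hint.
  rewrite (RInt_eq_0_on F 0 (exp T)), (RInt_eq_0_on F (exp (T + L)) R0);
    [change (plus 0 (plus ?m 0)) with (0 + (m + 0)); ring| | | |].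
  - assumption.
  - intros y Hy; apply Hout; [lra|].
    apply log_window_nonpos; [lra|right; apply Rlt_le, lt_ln_of_exp_lt; apply Hy].
  - lra.
  - intros y Hy; apply Hout; [lra|].
    apply log_window_nonpos; [lra|left; apply Rlt_le, ln_lt_of_lt_exp; apply Hy].
Qed.

Lemma Qform_log_bump_lt_0 (R0 c2 T L : R) :
  0 < L -> T + L <= 0 -> exp (T + L) <= R0 ->
  (forall r, exp T < r < exp (T + L) -> c2 <= p * Rpower (v r) (p - 1) * r ^ 2) ->
  exp (T + L) ^ 2 <= (c2 - al ^ 2) / 2 -> 24 < (c2 - al ^ 2) * L ^ 2 ->
  Qform N p v R0 (log_bump al T L) < 0.
Proof.
  intros HL HTL HR0 HV Hsmall Hlong.
  pose proof (is_RInt_bump_energy_density L al (c2 - al ^ 2) T HL) as HK.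
  rewrite Qform_log_bump by assumption.
  eapply Rle_lt_trans; [apply RInt_le; [| |eexists; eassumption|]|].
  - left; apply exp_increasing; lra.
  - apply ex_RInt_Qdensity, log_bump_radial_test_fun; assumption.
  - intros r Hr; apply Qdensity_log_bump_le; [assumption|apply HV; assumption|].
    apply Rle_trans with (exp (T + L) ^ 2); [apply pow_incr; pose proof (exp_pos T); lra|assumption].
  - rewrite (is_RInt_unique _ _ _ _ HK).
    assert (L ^ 7 * (24 - (c2 - al ^ 2) * L ^ 2) < L ^ 7 * 0)
      by (apply Rmult_lt_compat_l; [apply pow_lt|]; lra).
    lra.
Qed.

End log_bump_energy.

(** * Infinite Morse index above the Hardy constant *)

Lemma lincomb_sq_orthogonal (k : nat) (c : nat -> R) (f : nat -> R -> R) (r : R) :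
  (forall i j, (i < k)%nat -> (j < k)%nat -> i <> j -> f i r * f j r = 0) ->
  lincomb k c f r ^ 2 = lincomb k (fun i => c i ^ 2) (fun i y => f i y ^ 2) r.
Proof.
  induction k as [|k IH]; intros Horth; cbn [lincomb]; [ring|].
  rewrite <- IH by (intros; apply Horth; lia).
  assert (Hcross : f k r * lincomb k c f r = 0).
  { pose proof (lincomb_affine k c (f k) (fun _ => 0) f f r) as Haff.
    rewrite lincomb_zero in Haff; [lra|].
    intros i Hi; rewrite Horth by lia; ring. }
  replace ((lincomb k c f r + c k * f k r) ^ 2)
    with (lincomb k c f r ^ 2 + 2 * c k * (f k r * lincomb k c f r) + c k ^ 2 * f k r ^ 2)
    by ring.
  rewrite Hcross; ring.
Qed.

Lemma Qdensity_lincomb_orthogonal (N : nat) (p : R) (v : R -> R) (k : nat) (c : nat -> R)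
    (phi : nat -> R -> R) (r : R) :
  (forall i, (i < k)%nat -> radial_test_fun (phi i)) ->
  (forall i j, (i < k)%nat -> (j < k)%nat -> i <> j ->
     phi i r * phi j r = 0 /\ Derive (phi i) r * Derive (phi j) r = 0) ->
  Qdensity N p v (lincomb k c phi) r
  = lincomb k (fun i => c i ^ 2) (fun i => Qdensity N p v (phi i)) r.
Proof.
  intros Hphi Horth.
  set (w := fun y : R => y ^ (N - 1)).
  set (V := fun y : R => p * Rpower (v y) (p - 1)).
  rewrite (lincomb_ext k _ (fun i => c i ^ 2) _
             (fun i y => w y * Derive (phi i) y ^ 2 + (w y - V y * w y) * phi i y ^ 2) r r)
    by (intros; unfold Qdensity, w, V; ring).
  rewrite (lincomb_affine k _ w (fun y => w y - V y * w y)).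
  unfold Qdensity; rewrite (proj2 (Derive_lincomb k c phi r
             (fun i Hi => proj1 (radial_test_fun_C1 _ (Hphi i Hi) r)))).
  rewrite !lincomb_sq_orthogonal by (intros i j Hi Hj Hij; apply (Horth i j Hi Hj Hij)).
  unfold w, V; ring.
Qed.

(* A [lincomb] of constant functions, evaluated anywhere, is a plain finite sum. *)
Lemma RInt_lincomb (k : nat) (c : nat -> R) (f : nat -> R -> R) (a b : R) :
  (forall i, (i < k)%nat -> ex_RInt (f i) a b) ->
  ex_RInt (lincomb k c f) a b /\
  RInt (lincomb k c f) a b = lincomb k c (fun i _ => RInt (f i) a b) 0.
Proof.
  induction k as [|k IH]; intros Hf; simpl.
  - split; [apply (ex_RInt_const a b 0)|rewrite RInt_const; apply Rmult_0_r].
  - destruct IH as [IHex IHeq]; [intros; apply Hf; lia|].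
    assert (Hk : ex_RInt (fun y => c k * f k y) a b)
      by (apply (ex_RInt_scal (f k)), Hf; lia).
    split; [apply (ex_RInt_plus (lincomb k c f)); assumption|].
    rewrite (RInt_plus (lincomb k c f)), IHeq, (RInt_scal (f k)) by (assumption || (apply Hf; lia)).
    reflexivity.
Qed.

Lemma lincomb_sq_le_0 (k : nat) (c : nat -> R) (q : nat -> R -> R) (r : R) :
  (forall i, (i < k)%nat -> q i r <= 0) -> lincomb k (fun i => c i ^ 2) q r <= 0.
Proof.
  induction k as [|k IH]; intros Hq; cbn [lincomb]; [lra|].
  pose proof (IH ltac:(intros; apply Hq; lia)).
  pose proof (pow2_ge_0 (c k)); pose proof (Hq k ltac:(lia)).
  assert (c k ^ 2 * q k r <= 0) by (apply Rmult_le_0_l; assumption || lra).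
  lra.
Qed.

Lemma lincomb_sq_lt_0 (k : nat) (c : nat -> R) (q : nat -> R -> R) (r : R) :
  (forall i, (i < k)%nat -> q i r < 0) -> (exists i, (i < k)%nat /\ c i <> 0) ->
  lincomb k (fun i => c i ^ 2) q r < 0.
Proof.
  induction k as [|k IH]; intros Hq [i [Hi Hci]]; cbn [lincomb]; [lia|].
  pose proof (Hq k ltac:(lia)).
  destruct (Req_dec (c k) 0) as [Hck|Hck].
  - rewrite Hck; replace ((0:R) ^ 2 * q k r) with 0 by ring; rewrite Rplus_0_r.
    apply IH; [intros; apply Hq; lia|].
    exists i; split; [|assumption].
    destruct (Nat.eq_dec i k) as [->|Hik]; [contradiction|lia].
  - pose proof (lincomb_sq_le_0 k c q r ltac:(intros; apply Rlt_le, Hq; lia)).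
    assert (c k ^ 2 * q k r < 0)
      by (apply Rmult_pos_neg; [apply pow2_gt_0|]; assumption).
    lra.
Qed.

Lemma morse_index_infinite_of_orthogonal (N : nat) (p : R) (v : R -> R) (R0 : R)
    (phi : nat -> R -> R) :
  0 <= R0 -> (forall r, 0 < r -> continuous v r /\ 0 < v r) ->
  (forall i, radial_test_fun (phi i)) -> (forall i, Qform N p v R0 (phi i) < 0) ->
  (forall i j r, i <> j -> 0 < r ->
     phi i r * phi j r = 0 /\ Derive (phi i) r * Derive (phi j) r = 0) ->
  morse_index_infinite N p v R0.
Proof.
  intros HR0 Hv Hphi Hneg Horth k; exists phi; split; [intros; apply Hphi|].
  intros c Hc; rewrite Qform_Qdensity.
  rewrite (RInt_ext _ (lincomb k (fun i => c i ^ 2) (fun i => Qdensity N p v (phi i)))).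
  - rewrite (proj2 (RInt_lincomb _ _ _ _ _ (fun i _ => ex_RInt_Qdensity p v Hv N _ _ _ (Hphi i)))).
    apply lincomb_sq_lt_0; [|assumption].
    intros i _; apply Hneg.
  - intros x Hx; rewrite Rmin_left, Rmax_right in Hx by assumption.
    apply Qdensity_lincomb_orthogonal; [intros; apply Hphi|].
    intros i j _ _ Hij; apply Horth; [assumption|lra].
Qed.

Lemma log_bump_orthogonal (al T T' L r : R) :
  0 < L -> T' + L <= T -> 0 < r ->
  log_bump al T L r * log_bump al T' L r = 0 /\
  Derive (log_bump al T L) r * Derive (log_bump al T' L) r = 0.
Proof.
  intros HL HT Hr.
  destruct (Rle_or_lt (ln r) T) as [Hln|Hln].
  - destruct (log_bump_vanishing al T L r Hr) as [-> ->];
      [apply log_window_nonpos; [lra|left; assumption]|split; ring].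
  - destruct (log_bump_vanishing al T' L r Hr) as [-> ->];
      [apply log_window_nonpos; [lra|right; lra]|split; ring].
Qed.

Lemma exists_small_radius (x y z : R) :
  0 < x -> 0 < y -> 0 < z -> exists b, 0 < b /\ b < x /\ b <= y /\ b ^ 2 <= z /\ b <= 1.
Proof.
  intros Hx Hy Hz; pose proof (sqrt_lt_R0 z Hz) as Hsqrt.
  exists (Rmin (Rmin (x / 2) y) (Rmin (sqrt z) 1)).
  pose proof (Rmin_l (Rmin (x / 2) y) (Rmin (sqrt z) 1)) as H1.
  pose proof (Rmin_r (Rmin (x / 2) y) (Rmin (sqrt z) 1)) as H2.
  pose proof (Rmin_l (x / 2) y); pose proof (Rmin_r (x / 2) y).
  pose proof (Rmin_l (sqrt z) 1); pose proof (Rmin_r (sqrt z) 1).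
  assert (Hpos : 0 < Rmin (Rmin (x / 2) y) (Rmin (sqrt z) 1)) by (repeat apply Rmin_pos; lra).
  repeat split; try lra.
  apply Rle_trans with (sqrt z ^ 2); [apply pow_incr; lra|rewrite pow2_sqrt; lra].
Qed.

Lemma morse_index_infinite_of_limit_gt_hardy (N : nat) (p : R) (v : R -> R) (R0 l : R) :
  (1 <= N)%nat -> 0 < R0 -> (forall r, 0 < r -> continuous v r /\ 0 < v r) ->
  filterlim (fun r => p * Rpower (v r) (p - 1) * r ^ 2) (at_right 0) (locally l) ->
  ((INR N - 2) / 2) ^ 2 < l -> morse_index_infinite N p v R0.
Proof.
  intros HN HR0 Hv Hlim Hl.
  set (al := (INR N - 2) / 2) in Hl.
  set (c2 := (al ^ 2 + l) / 2).
  assert (Hgap : 0 < c2 - al ^ 2) by (unfold c2; lra).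
  destruct (at_right_0_between _ l c2 (l + 1) Hlim) as [rho [Hrho Hnear]]; [unfold c2; lra|].
  destruct (exists_small_radius rho R0 ((c2 - al ^ 2) / 2)) as [b [Hb [Hb_rho [Hb_R0 [Hb_sq Hb_1]]]]];
    [assumption..|lra|].
  set (L := 24 / (c2 - al ^ 2) + 1).
  assert (HL : 1 < L) by (pose proof (Rdiv_lt_0_compat 24 _ ltac:(lra) Hgap); unfold L; lra).
  assert (Hlong : 24 < (c2 - al ^ 2) * L ^ 2).
  { assert ((c2 - al ^ 2) * L < (c2 - al ^ 2) * L ^ 2)
      by (apply Rmult_lt_compat_l; [assumption|simpl; nra]).
    replace ((c2 - al ^ 2) * L) with (24 + (c2 - al ^ 2)) in H by (unfold L; field; lra).
    lra. }
  set (T := fun i => ln b - L - INR i * (L + 1)).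
  assert (HT : forall i, T i + L <= ln b) by (intros i; pose proof (pos_INR i); unfold T; nra).
  assert (Hexp : forall i, exp (T i + L) <= b)
    by (intros i; rewrite <- (exp_ln b) by assumption; apply exp_le_exp_of_le, HT).
  pose proof (ln_le_0 b Hb Hb_1) as Hlnb.
  apply (morse_index_infinite_of_orthogonal N p v R0 (fun i => log_bump al (T i) L));
    [lra|assumption| | |].
  - intros i; apply log_bump_radial_test_fun; [lra|pose proof (HT i); lra].
  - intros i; pose proof (HT i); pose proof (Hexp i); pose proof (exp_pos (T i + L)).
    apply (Qform_log_bump_lt_0 N p v HN Hv R0 c2); fold al; try lra.
    + intros r Hr; apply Rlt_le, Hnear; pose proof (exp_pos (T i)); lra.
    + apply Rle_trans with (b ^ 2); [apply pow_incr|]; lra.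
  - intros i j r Hij Hr.
    assert (Hspaced : forall i j, (i < j)%nat -> T j + L <= T i).
    { intros i' j' Hlt; apply le_INR in Hlt; rewrite S_INR in Hlt; unfold T; nra. }
    destruct (Nat.lt_total i j) as [Hlt|[Heq|Hlt]]; [|contradiction|].
    + apply log_bump_orthogonal; [lra|apply Hspaced; assumption|assumption].
    + rewrite (Rmult_comm (log_bump _ _ _ r)), (Rmult_comm (Derive _ r)).
      apply log_bump_orthogonal; [lra|apply Hspaced; assumption|assumption].
Qed.

(** * The limit of [r^2 V] and the Joseph-Lundgren exponent *)

Lemma theta_lt_half_iff (p d : R) :
  1 < p -> 0 < d -> (theta p < d / 2 <-> 1 + 4 / d < p).
Proof.
  intros Hp Hd; unfold theta; split; intros H.
  - apply (Rlt_div_l 2 (d / 2) (p - 1)) in H; [|lra].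
    assert (4 / d < p - 1); [|lra].
    apply (Rlt_div_l 4 (p - 1) d); [lra|].
    replace ((p - 1) * d) with (2 * (d / 2 * (p - 1))) by field; lra.
  - apply (Rlt_div_l 2 (d / 2) (p - 1)); [lra|].
    assert (H4 : 4 / d < p - 1) by lra.
    apply (Rlt_div_l 4 (p - 1) d) in H4; [|lra].
    replace (d / 2 * (p - 1)) with ((p - 1) * d / 2) by field; lra.
Qed.

Lemma half_lt_theta_iff (p d : R) :
  1 < p -> 0 < d -> (d / 2 < theta p <-> p < 1 + 4 / d).
Proof.
  intros Hp Hd; unfold theta; split; intros H.
  - apply (Rlt_div_r (d / 2) 2 (p - 1)) in H; [|lra].
    assert (p - 1 < 4 / d); [|lra].
    apply (Rlt_div_r (p - 1) 4 d); [lra|].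
    replace ((p - 1) * d) with (2 * (d / 2 * (p - 1))) by field; lra.
  - apply (Rlt_div_r (d / 2) 2 (p - 1)); [lra|].
    assert (H4 : p - 1 < 4 / d) by lra.
    apply (Rlt_div_r (p - 1) 4 d) in H4; [|lra].
    replace (d / 2 * (p - 1)) with ((p - 1) * d / 2) by field; lra.
Qed.

Lemma theta_bounds (N : nat) (p : R) :
  (3 <= N)%nat -> p_S N < p -> 1 < p /\ 0 < theta p < (INR N - 2) / 2.
Proof.
  intros HN Hp; apply le_INR in HN; simpl in HN; unfold p_S in Hp.
  replace ((INR N + 2) / (INR N - 2)) with (1 + 4 / (INR N - 2)) in Hp by (field; lra).
  assert (0 < 4 / (INR N - 2)) by (apply Rdiv_lt_0_compat; lra).
  split; [lra|split].
  - unfold theta; apply Rdiv_lt_0_compat; lra.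
  - apply theta_lt_half_iff; lra.
Qed.

Lemma p_times_theta (p : R) : 1 < p -> p * theta p = theta p + 2.
Proof. intros Hp; unfold theta; field; lra. Qed.

Lemma limit_value (N : nat) (p : R) :
  1 < p -> 0 < theta p < INR N - 2 ->
  p * Rpower (A_pN p N) (p - 1) = (theta p + 2) * (INR N - 2 - theta p).
Proof.
  intros Hp Hth; unfold A_pN.
  rewrite Rpower_mult; replace (1 / (p - 1) * (p - 1)) with 1 by (field; lra).
  rewrite Rpower_1 by nra.
  rewrite <- p_times_theta by assumption; ring.
Qed.

Lemma singular_solution_potential_limit (N : nat) (p : R) (u : R -> R) :
  1 < p -> singular_solution N p u ->
  filterlim (fun r => p * Rpower (u r) (p - 1) * r ^ 2) (at_right 0)
            (locally (p * Rpower (A_pN p N) (p - 1))).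
Proof.
  intros Hp [Hpos [_ Hlim]].
  set (g := fun y => p * Rpower y (p - 1)).
  assert (Hg : continuous g (A_pN p N)).
  { apply (continuous_mult (fun _ => p)); [apply continuous_const|].
    apply continuous_Rpower, Rpower_gt_0. }
  apply (filterlim_ext_loc (fun r => g (Rpower r (theta p) * u r))).
  - exists (mkposreal 1 Rlt_0_1); intros r _ Hr; unfold g.
    rewrite <- Rpower_mult_distr, Rpower_mult by (apply Rpower_gt_0 || apply Hpos; assumption).
    replace (theta p * (p - 1)) with (INR 2) by (unfold theta; simpl; field; lra).
    rewrite Rpower_pow by assumption; ring.
  - exact (filterlim_comp _ _ _ _ _ _ _ _ Hlim Hg).
Qed.

Lemma hardy_gap_factor (n s th : R) :
  s ^ 2 = n - 1 ->
  ((n - 2) / 2) ^ 2 - (th + 2) * (n - 2 - th)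
  = (th - ((n - 4) / 2 - s)) * (th - ((n - 4) / 2 + s)).
Proof. intros Hs; field_simplify; rewrite Hs; field. Qed.

Lemma limit_lt_hardy_of_p_JL_lt (N : nat) (p : R) :
  (3 <= N)%nat -> p_S N < p -> Rbar_lt (p_JL N) (Finite p) ->
  (theta p + 2) * (INR N - 2 - theta p) < ((INR N - 2) / 2) ^ 2.
Proof.
  intros HN Hp HJL.
  destruct (theta_bounds N p HN Hp) as [Hp1 [Hth0 Hth1]].
  unfold p_JL in HJL; destruct (Nat.leb_spec 11 N) as [H11|H11]; simpl in HJL; [|contradiction].
  apply le_INR in H11; simpl in H11.
  set (s := sqrt (INR N - 1)) in HJL.
  assert (Hs2 : s ^ 2 = INR N - 1) by (apply pow2_sqrt; lra).
  assert (Hs0 : 0 <= s) by apply sqrt_pos.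
  assert (Hd : 0 < INR N - 4 - 2 * s) by nra.
  apply theta_lt_half_iff in HJL; [|assumption..].
  pose proof (hardy_gap_factor (INR N) s (theta p) Hs2).
  assert (0 < (theta p - ((INR N - 4) / 2 - s)) * (theta p - ((INR N - 4) / 2 + s))) by nra.
  lra.
Qed.

Lemma hardy_lt_limit_of_lt_p_JL (N : nat) (p : R) :
  (3 <= N)%nat -> p_S N < p -> Rbar_lt (Finite p) (p_JL N) ->
  ((INR N - 2) / 2) ^ 2 < (theta p + 2) * (INR N - 2 - theta p).
Proof.
  intros HN Hp HJL.
  destruct (theta_bounds N p HN Hp) as [Hp1 [Hth0 Hth1]].
  pose proof (le_INR _ _ HN) as HN'; simpl in HN'.
  set (s := sqrt (INR N - 1)).
  assert (Hs2 : s ^ 2 = INR N - 1) by (apply pow2_sqrt; lra).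
  assert (Hs0 : 0 <= s) by apply sqrt_pos.
  assert (Hs1 : 1 < s) by nra.
  assert (Hlow : (INR N - 4) / 2 - s < theta p).
  { unfold p_JL in HJL; destruct (Nat.leb_spec 11 N) as [H11|H11]; simpl in HJL.
    - apply le_INR in H11; simpl in H11; fold s in HJL.
      assert (Hd : 0 < INR N - 4 - 2 * s) by nra.
      apply half_lt_theta_iff in HJL; [lra|assumption..].
    - assert (H10 : (N <= 10)%nat) by lia.
      apply le_INR in H10; simpl in H10; nra. }
  pose proof (hardy_gap_factor (INR N) s (theta p) Hs2).
  assert ((theta p - ((INR N - 4) / 2 - s)) * (theta p - ((INR N - 4) / 2 + s)) < 0) by nra.
  lra.
Qed.

Lemma singular_solution_continuous_pos (N : nat) (p : R) (u : R -> R) :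
  singular_solution N p u -> forall r, 0 < r -> continuous u r /\ 0 < u r.
Proof.
  intros [Hpos [Hode _]] r Hr; split; [|apply Hpos; assumption].
  apply ex_derive_continuous_R, Hode; assumption.
Qed.

(* The Neumann condition at [R0] is natural for [Qform]. *)
Theorem proposition1p6 (N : nat) (R0 p : R) (u : R -> R) :
  (3 <= N)%nat -> 0 < R0 -> p_S N < p ->
  singular_solution N p u ->
  (exists i : nat, (1 <= i)%nat /\ ith_critical_radius u i R0) ->
  (Rbar_lt (p_JL N) (Finite p) -> morse_index_finite N p u R0) /\
  (Rbar_lt (Finite p) (p_JL N) -> morse_index_infinite N p u R0).
Proof.
  intros HN HR0 Hp Hsol _.
  destruct (theta_bounds N p HN Hp) as [Hp1 Htheta].
  pose proof (singular_solution_continuous_pos N p u Hsol) as Hu.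
  pose proof (singular_solution_potential_limit N p u Hp1 Hsol) as Hlim.
  rewrite limit_value in Hlim by (apply le_INR in HN; simpl in HN; lra).
  split; intros HJL.
  - apply (morse_index_finite_of_limit_lt_hardy N p u R0 _ HN HR0 Hu Hlim).
    apply limit_lt_hardy_of_p_JL_lt; assumption.
  - apply (morse_index_infinite_of_limit_gt_hardy N p u R0 _ ltac:(lia) HR0 Hu Hlim).
    apply hardy_lt_limit_of_lt_p_JL; assumption.
Qed.
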